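(* There is a (deterministic) $\Sigma_{\diamond}$-matrix $\mathbb{M}$ such that $\rhd_{\diamond}=\rhd_{\mathbb{M}}$.
   Context: $\Sigma_\diamond$ is the signature with a single binary connective $\diamond$ (platypus). $\mathbb{B}_\diamond=\langle\{0,1\},\cdot,\{1\}\rangle$ is the two-valued Nmatrix interpreting $\diamond$ by $\diamond(0,0)=\{0\}$, $\diamond(1,1)=\{1\}$, $\diamond(0,1)=\diamond(1,0)=\{0,1\}$. For an Nmatrix (or matrix, where all connectives are interpreted as functions) $\mathbb{M}$ with designated set $D$, $\Gamma\rhd_{\mathbb{M}}\Delta$ iff every $\mathbb{M}$-valuation $v$ with $v(\Gamma)\subseteq D$ satisfies $v(\Delta)\cap D\neq\emptyset$; $\rhd_\diamond$ is $\rhd_{\mathbb{B}_\diamond}$. A matrix is deterministic, i.e. each connective is interpreted as a function. *)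

From Stdlib Require Import Bool.

Inductive fm : Type :=
| Var : nat -> fm
| Dia : fm -> fm -> fm.

Definition dia_nd (a b c : bool) : Prop :=
  if Bool.eqb a b then c = a else True.   (* diamond(0,0)={0}, diamond(1,1)={1}, else {0,1} *)

Definition Bdia_valuation (v : fm -> bool) : Prop :=
  forall p q, dia_nd (v p) (v q) (v (Dia p q)).

Definition cons_dia (Gamma Delta : fm -> Prop) : Prop :=
  forall v : fm -> bool, Bdia_valuation v ->
    (forall p, Gamma p -> v p = true) ->
    exists q, Delta q /\ v q = true.

Definition matrix_valuation {V : Type} (op : V -> V -> V) (v : fm -> V) : Prop :=
  forall p q, v (Dia p q) = op (v p) (v q).

Definition cons_mx {V : Type} (op : V -> V -> V) (D : V -> Prop)
    (Gamma Delta : fm -> Prop) : Prop :=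
  forall v : fm -> V, matrix_valuation op v ->
    (forall p, Gamma p -> D (v p)) ->
    exists q, Delta q /\ D (v q).

From Stdlib Require Import Bool.

(* An element of the matrix is a formula paired with a valuation to evaluate it
   under.  Combining (w, p) and (w', q) yields Dia p q evaluated under w when w
   respects the nondeterministic table at Dia p q, and otherwise under a constant
   valuation whose value is allowed by the table.  Hence truth values of matrix
   valuations always form Nmatrix valuations, while an Nmatrix valuation u lifts
   to the matrix valuation p |-> (u, p), which never needs repairing and has the
   same truth values. *)

Section Determinization.

Variable B : Type.
Variable nd : B -> B -> B -> Prop.
Hypothesis nd_dec : forall a b c, {nd a b c} + {~ nd a b c}.
Variable pick : B -> B -> B.
Hypothesis nd_pick : forall a b, nd a b (pick a b).
Variable D : B -> Prop.

Definition nd_valuation (v : fm -> B) : Prop :=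
  forall p q, nd (v p) (v q) (v (Dia p q)).

Definition cons_nd (Gamma Delta : fm -> Prop) : Prop :=
  forall v : fm -> B, nd_valuation v ->
    (forall p, Gamma p -> D (v p)) ->
    exists q, Delta q /\ D (v q).

Definition det_carrier : Type := ((fm -> B) * fm)%type.

Definition det_eval (x : det_carrier) : B := fst x (snd x).

Definition det_op (x y : det_carrier) : det_carrier :=
  let (w, p) := x in
  let (w', q) := y in
  (if nd_dec (w p) (w' q) (w (Dia p q)) then w else fun _ => pick (w p) (w' q),
   Dia p q).

Definition det_designated (x : det_carrier) : Prop := D (det_eval x).

Lemma nd_det_eval_op (x y : det_carrier) :
  nd (det_eval x) (det_eval y) (det_eval (det_op x y)).
Proof.
  destruct x as [w p], y as [w' q]; unfold det_op, det_eval; simpl.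
  destruct (nd_dec (w p) (w' q) (w (Dia p q))); auto.
Qed.

Lemma nd_valuation_det_eval (v : fm -> det_carrier) :
  matrix_valuation det_op v -> nd_valuation (fun f => det_eval (v f)).
Proof.
  intros Hv p q; simpl; rewrite Hv; apply nd_det_eval_op.
Qed.

Lemma matrix_valuation_pair (u : fm -> B) :
  nd_valuation u -> matrix_valuation det_op (fun f => (u, f)).
Proof.
  intros Hu p q; unfold det_op.
  destruct (nd_dec (u p) (u q) (u (Dia p q))) as [_ | Hnot].
  - reflexivity.
  - contradiction (Hnot (Hu p q)).
Qed.

Theorem cons_nd_det (Gamma Delta : fm -> Prop) :
  cons_nd Gamma Delta <-> cons_mx det_op det_designated Gamma Delta.
Proof.
  split.
  - intros Hnd v Hv HGamma.
    exact (Hnd _ (nd_valuation_det_eval v Hv) HGamma).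
  - intros Hmx u Hu HGamma.
    exact (Hmx _ (matrix_valuation_pair u Hu) HGamma).
Qed.

End Determinization.

Arguments det_op {B nd} nd_dec pick x y.
Arguments det_designated {B} D x.
Arguments cons_nd_det {B nd} nd_dec pick nd_pick D Gamma Delta.

Lemma dia_nd_dec (a b c : bool) : {dia_nd a b c} + {~ dia_nd a b c}.
Proof.
  unfold dia_nd; destruct (Bool.eqb a b).
  - apply bool_dec.
  - left; exact I.
Qed.

Lemma dia_nd_left (a b : bool) : dia_nd a b a.
Proof.
  unfold dia_nd; destruct (Bool.eqb a b); auto.
Qed.

Theorem proposition3 :
  exists (V : Type) (op : V -> V -> V) (D : V -> Prop),
    forall Gamma Delta : fm -> Prop, cons_dia Gamma Delta <-> cons_mx op D Gamma Delta.
Proof.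
  exists (det_carrier bool),
    (det_op dia_nd_dec (fun a _ => a)),
    (det_designated (fun b => b = true)).
  intros Gamma Delta.
  exact (cons_nd_det dia_nd_dec (fun a _ => a) dia_nd_left
           (fun b => b = true) Gamma Delta).
Qed.
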